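(* Let $\Gamma$ be a Deza graph with parameters $(n,k,k-1,a)$, $k>1$, $\beta=1$. For an $NA$-vertex $x$, the vertex $(x')_b$ is not adjacent to $x$.
   Context: A Deza graph with parameters $(n,k,b,a)$, $a\le b$, is a $k$-regular graph on $n$ vertices in which any two distinct vertices have $a$ or $b$ common neighbours; $\beta$ is the number of vertices $u\ne v$ with exactly $b$ common neighbours with a given vertex $v$. Since $\beta=1$, for each vertex $x$ let $x_b$ denote the unique vertex having $b=k-1$ common neighbours with $x$. A vertex $x$ is an $A$-vertex if $x$ is adjacent to $x_b$, and an $NA$-vertex otherwise. For an $NA$-vertex $x$, $x'$ denotes the unique neighbour of $x$ not adjacent to $x_b$. *)

From mathcomp Require Import all_boot.
Set Implicit Arguments. Unset Strict Implicit. Unset Printing Implicit Defensive.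

Definition simple_graph (T : finType) (e : rel T) : Prop :=
  symmetric e /\ irreflexive e.

Definition nbhd (T : finType) (e : rel T) (x : T) : {set T} := [set y | e x y].
Definition ncommon (T : finType) (e : rel T) (x y : T) : nat :=
  #|[set z | e x z && e y z]|.

Definition deza_graph (T : finType) (e : rel T) (n k b a : nat) : Prop :=
  [/\ simple_graph e, #|T| = n, (forall x, #|nbhd e x| = k), a <= b &
      forall x y, x != y -> ncommon e x y = a \/ ncommon e x y = b].

Definition beta_at (T : finType) (e : rel T) (b : nat) (v : T) : nat :=
  #|[set u | (u != v) && (ncommon e v u == b)]|.

From mathcomp Require Import all_boot zify.
Set Implicit Arguments. Unset Strict Implicit. Unset Printing Implicit Defensive.

(* Let z be the unique neighbour of x_b outside N(x), so that
   N(x) = {x'} + I and N(x_b) = {z} + I with I = N(x) & N(x_b) of size k-1.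
   Since beta = 1, every u other than x, x_b has a common neighbours with
   both x and x_b, hence u is adjacent to x' iff it is adjacent to z.  The
   common neighbours of x' and z are therefore N(x') minus x, so z = (x')_b,
   and z is not adjacent to x. *)

Section FinsetCounting.
Variable T : finType.
Implicit Types A B N I : {set T}.

Lemma setD_set1 A B : 0 < #|A| -> #|A :&: B| = #|A|.-1 ->
  exists p, A :\: B = [set p].
Proof.
move=> A_gt0 AB; apply/cards1P/eqP.
by have := cardsID B A; rewrite AB; lia.
Qed.

Lemma card_setIU1 N I p : p \notin I ->
  #|N :&: (p |: I)| = (p \in N) + #|N :&: I|.
Proof.
move=> pI; case pN: (p \in N).
- have -> : N :&: (p |: I) = p |: (N :&: I).
    by apply/setP => t; rewrite !inE; case: eqP => [->|]; rewrite ?pN.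
  by rewrite cardsU1 inE (negbTE pI) andbF.
- have -> : N :&: (p |: I) = N :&: I.
    by apply/setP => t; rewrite !inE; case: eqP => [->|]; rewrite ?pN.
  by [].
Qed.

Lemma mem_eq_card_setIU1 N I p q : p \notin I -> q \notin I ->
  #|N :&: (p |: I)| = #|N :&: (q |: I)| -> (p \in N) = (q \in N).
Proof.
by move=> pI qI; rewrite !card_setIU1 // => /addIn; do 2!case: (_ \in N).
Qed.

End FinsetCounting.

Lemma mem_nbhd (T : finType) (e : rel T) x y : (y \in nbhd e x) = e x y.
Proof. by rewrite inE. Qed.

Lemma ncommonE (T : finType) (e : rel T) x y :
  ncommon e x y = #|nbhd e x :&: nbhd e y|.
Proof. by apply: eq_card => t; rewrite !inE. Qed.

Lemma ncommonC (T : finType) (e : rel T) x y : ncommon e x y = ncommon e y x.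
Proof. by apply: eq_card => t; rewrite !inE andbC. Qed.

Section DezaBetaOne.
Variables (T : finType) (e : rel T) (k a : nat).
Hypothesis e_sym : symmetric e.
Hypothesis e_regular : forall x, #|nbhd e x| = k.
Hypothesis ncommon_ab : forall x y, x != y ->
  ncommon e x y = a \/ ncommon e x y = k.-1.
Hypothesis beta1 : forall v, beta_at e k.-1 v = 1.

Lemma partner_unique v u w : u != v -> w != v ->
  ncommon e v u = k.-1 -> ncommon e v w = k.-1 -> u = w.
Proof.
move=> uv wv cu cw; move/eqP/cards1P: (beta1 v) => [p Sp].
have inS t : t != v -> ncommon e v t = k.-1 -> t = p.
  by move=> tv ct; apply/set1P; rewrite -Sp inE tv ct eqxx.
by rewrite (inS u) // (inS w).
Qed.

Lemma ncommon_nonpartner x xb u : xb != x -> ncommon e x xb = k.-1 ->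
  u != x -> u != xb -> ncommon e x u = a.
Proof.
move=> xbx cxb ux uxb; have xu : x != u by rewrite eq_sym.
case: (ncommon_ab xu) => [//|cu].
by case/eqP: uxb; exact: partner_unique ux xbx cu cxb.
Qed.

Lemma nbhd_partner_split x y : 0 < k -> ncommon e x y = k.-1 ->
  exists2 p, p \notin nbhd e y & nbhd e x = p |: (nbhd e x :&: nbhd e y).
Proof.
rewrite ncommonE -(e_regular x) => k_gt0 cxy.
have [p Dp] := setD_set1 k_gt0 cxy.
exists p; first by have := set11 p; rewrite -Dp inE => /andP[].
by rewrite -Dp setUC setID.
Qed.

Lemma ncommon_twins x xb p q :
  (forall u, u != x -> u != xb -> e u p = e u q) ->
  e x p -> ~~ e x q -> ~~ e p xb -> ncommon e p q = k.-1.
Proof.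
move=> twin xp xq pxb.
have -> : ncommon e p q = #|nbhd e p :\ x|.
  apply: eq_card => t; rewrite !inE.
  have [->|tx] := eqVneq t x; first by rewrite (e_sym q) (negbTE xq) andbF.
  have [->|txb] := eqVneq t xb; first by rewrite (negbTE pxb).
  by rewrite !(e_sym _ t) twin // andbb.
by have := cardsD1 x (nbhd e p); rewrite e_regular mem_nbhd e_sym xp; lia.
Qed.

Lemma partner_of_private_nbr x xb x' : 0 < k -> xb != x ->
  ncommon e x xb = k.-1 -> e x x' -> ~~ e x' xb ->
  exists2 z, ~~ e x z & ncommon e x' z = k.-1.
Proof.
move=> k_gt0 xbx cxb xx' x'xb.
have cbx : ncommon e xb x = k.-1 by rewrite ncommonC.
set I := nbhd e x :&: nbhd e xb.
have [p pNb Nx] := nbhd_partner_split k_gt0 cxb.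
have [z zNx Nb] := nbhd_partner_split k_gt0 cbx.
rewrite setIC in Nb; rewrite -/I in Nx Nb.
have x'I : x' \notin I by rewrite inE !mem_nbhd (e_sym xb) (negbTE x'xb) andbF.
have zI : z \notin I by rewrite inE (negbTE zNx).
have x'p : x' = p.
  by apply/eqP; move: xx'; rewrite -mem_nbhd Nx in_setU1 (negbTE x'I) orbF.
have twin u : u != x -> u != xb -> e u x' = e u z.
  move=> ux uxb; rewrite -!mem_nbhd; apply: (mem_eq_card_setIU1 x'I zI).
  rewrite x'p -Nx -Nb -!ncommonE !(ncommonC e u).
  have xxb : x != xb by rewrite eq_sym.
  by rewrite (ncommon_nonpartner xbx cxb) // (ncommon_nonpartner xxb cbx).
have xz : ~~ e x z by rewrite -mem_nbhd.
by exists z; last exact: ncommon_twins twin xx' xz x'xb.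
Qed.

End DezaBetaOne.

Theorem lemma10 (T : finType) (e : rel T) (n k a : nat) :
  deza_graph e n k k.-1 a -> 1 < k ->
  (forall v, beta_at e k.-1 v = 1) ->
  forall x xb x' y : T,
    xb != x -> ncommon e x xb = k.-1 -> ~~ e x xb ->
    e x x' -> ~~ e x' xb ->
    y != x' -> ncommon e x' y = k.-1 ->
    ~~ e x y.
Proof.
(* The argument never uses that x is an NA-vertex. *)
case=> [[e_sym _] _ e_regular _ ncommon_ab] k_gt1 beta1.
move=> x xb x' y xbx cxb _ xx' x'xb yx' cx'y.
have [z xz cx'z] := partner_of_private_nbr e_sym e_regular ncommon_ab beta1
  (ltnW k_gt1) xbx cxb xx' x'xb.
have zx' : z != x' by apply: contraNneq xz => ->.
by rewrite (partner_unique beta1 yx' zx' cx'y cx'z).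
Qed.
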